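(* Let $m$ be a positive integer and let $\mathcal{P}\in\mathbb{R}^{m\times 123}$ be the bar code forward map $\mathcal{P}=\alpha\,\mathcal{G}(\sigma)\,\mathcal{D}$ described in the context, with columns labelled $p^{(j)}_k$ ($j\in[15]$, $k\in K_j$). Let $I_1,\dots,I_{15}\subset[m]$ and $\varepsilon\in\mathbb{R}$ satisfy (i) $\big\| p^{(j)}_k|_{[m]\setminus I_j}\big\|_1<\varepsilon$ for all $j\in[15]$ and all $k\in K_j$; and (ii) $\Big\| \big(\sum_{j'=j+1}^{15} p^{(j')}_{k_{j'}}\big)\big|_{I_j}\Big\|_1<\varepsilon$ for all $j\in[15]$ and all choices $k_{j+1}\in K_{j+1},\dots,k_{15}\in K_{15}$ (the empty sum, for $j=15$, being $0$). Let $x\in\{0,1\}^{123}$ be a bar code vector, let $h\in\mathbb{R}^m$, and let $d=\mathcal{P}x+h$. Suppose that $$\big\| p^{(j)}_{k_1}|_{I_j}-p^{(j)}_{k_2}|_{I_j}\big\|_1>2\big(\|h|_{I_j}\|_1+2\varepsilon\big)$$ for all $j\in[15]$ and all $k_1,k_2\in K_j$ with $k_1\neq k_2$. Then Algorithm 1, run on input $d$, outputs $\hat x=x$ (regardless of how ties in the argmin are broken).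
   Context: Notation: $[m]=\{1,\dots,m\}$. For $v\in\mathbb{R}^m$ and $S\subset[m]$, $v|_S$ denotes the vector of entries of $v$ indexed by $S$, and $\|\cdot\|_1$ is the $\ell_1$ norm. Forward map. Let $n=95$, let $t_1,\dots,t_m\in[0,95]$ be equally spaced points, and let $\sigma>0$, $\alpha>0$. $\mathcal{G}(\sigma)\in\mathbb{R}^{m\times 95}$ has entries $\mathcal{G}_{kj}=\frac{1}{\sqrt{2\pi}\sigma}\int_{j-1}^{j} e^{-(t_k-t)^2/(2\sigma^2)}\,dt$. Let $L,R$ be the $7\times 10$ binary matrices whose $(d+1)$-st column ($d=0,\dots,9$) is respectively the L-pattern and the R-pattern of digit $d$, where the L-patterns for digits $0,\dots,9$ are $0001101,0011001,0010011,0111101,0100011,0110001,0101111,0111011,0110111,0001011$ and each R-pattern is the corresponding L-pattern with $0$s and $1$s interchanged. Let $S=E=(1,0,1)^T$ and $M=(0,1,0,1,0)^T$. $\mathcal{D}\in\{0,1\}^{95\times 123}$ is the block-diagonal matrix $\mathrm{diag}(S,L,L,L,L,L,L,M,R,R,R,R,R,R,E)$. Set $\mathcal{P}=\alpha\mathcal{G}(\sigma)\mathcal{D}$. Column labelling. Let $K_j=\{1\}$ for $j\in\{1,8,15\}$ and $K_j=[10]$ otherwise. $p^{(1)}_1$ is column 1 of $\mathcal{P}$; for $j=2,\dots,7$ and $k\in[10]$, $p^{(j)}_k$ is column $1+10(j-2)+k$; $p^{(8)}_1$ is column 62; for $j=9,\dots,14$ and $k\in[10]$, $p^{(j)}_k$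 is column $62+10(j-9)+k$; $p^{(15)}_1$ is column 123. Bar code vector: $x\in\{0,1\}^{123}$ with $x_1=x_{62}=x_{123}=1$ and such that each of the twelve consecutive blocks of $10$ entries with indices $2\!-\!11,12\!-\!21,\dots,52\!-\!61,63\!-\!72,\dots,113\!-\!122$ contains exactly one entry equal to $1$; equivalently $\mathcal{P}x=\sum_{j=1}^{15}p^{(j)}_{k_j}$ for some $k_j\in K_j$. Algorithm 1 (input $d\in\mathbb{R}^m$): set $\hat x_\ell=1$ for $\ell\in\{1,62,123\}$ and $\hat x_\ell=0$ otherwise; set $\delta\leftarrow d-p^{(1)}_1$. For $j=2,3,\dots,14$ in increasing order: if $j=8$, set $\delta\leftarrow\delta-p^{(8)}_1$; otherwise choose $k_{\min}\in\arg\min_{k\in[10]}\|\delta-p^{(j)}_k\|_1$, set $\hat x_\ell=1$ where $\ell$ is the column index of $p^{(j)}_{k_{\min}}$ (i.e. $\ell=1+10(j-2)+k_{\min}$ if $j\le7$, $\ell=62+10(j-9)+k_{\min}$ if $j\ge9$), and set $\delta\leftarrow\delta-p^{(j)}_{k_{\min}}$. Output $\hat x$. *)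

From HB Require Import structures.
From mathcomp Require Import all_boot all_order all_algebra.
From mathcomp Require Import all_classical all_reals all_analysis.
Set Implicit Arguments. Unset Strict Implicit. Unset Printing Implicit Defensive.
Import Order.TTheory GRing.Theory Num.Theory.
Import numFieldNormedType.Exports.
Local Open Scope ring_scope.

(* Conventions: rows/columns of matrices are 0-based ('I_n); the labels
   j in [15], k in K_j and the block indices are 1-based as in the paper. *)

Definition Lpat (d : nat) : seq bool :=
  nth [::] [:: [:: false;false;false;true;true;false;true];
               [:: false;false;true;true;false;false;true];
               [:: false;false;true;false;false;true;true];
               [:: false;true;true;true;true;false;true];
               [:: false;true;false;false;false;true;true];
               [:: false;true;true;false;false;false;true];
               [:: false;true;false;true;true;true;true];
               [:: false;true;true;true;false;true;true];
               [:: false;true;true;false;true;true;true];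
               [:: false;false;false;true;false;true;true] ] d.
Definition Rpat (d : nat) : seq bool := map negb (Lpat d).
Definition SEpat : seq bool := [:: true; false; true].
Definition Mpat : seq bool := [:: false; true; false; true; false].

(* Entry (r, c) (0-based) of the block diagonal matrix
   D = diag(S, L,L,L,L,L,L, M, R,R,R,R,R,R, E) in {0,1}^{95 x 123}.
   Row blocks: S rows 0-2, L blocks rows 3+7b..9+7b (b=0..5), M rows 45-49,
   R blocks rows 50+7b..56+7b (b=0..5), E rows 92-94.
   Column blocks: S col 0, L blocks cols 1+10b..10+10b, M col 61,
   R blocks cols 62+10b..71+10b, E col 122. *)
Definition Dentry (r c : nat) : bool :=
  if c == 0%N then (r < 3)%N && nth false SEpat r
  else if (c < 61)%N then
    let b := ((c - 1) %/ 10)%N in let dg := ((c - 1) %% 10)%N in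
    [&& (3 + 7 * b <= r)%N, (r < 3 + 7 * b + 7)%N & nth false (Lpat dg) (r - (3 + 7 * b))]
  else if c == 61%N then [&& (45 <= r)%N, (r < 50)%N & nth false Mpat (r - 45)]
  else if (c < 122)%N then
    let b := ((c - 62) %/ 10)%N in let dg := ((c - 62) %% 10)%N in
    [&& (50 + 7 * b <= r)%N, (r < 50 + 7 * b + 7)%N & nth false (Rpat dg) (r - (50 + 7 * b))]
  else [&& c == 122%N, (92 <= r)%N, (r < 95)%N & nth false SEpat (r - 92)].

Definition Dmat (R : realType) : 'M[R]_(95, 123) :=
  \matrix_(r < 95, c < 123) (Dentry r c)%:R.

(* G(sigma) with sampling points t : 'I_m -> R;
   G_{kj} = 1/(sqrt(2 pi) sigma) * int_{j-1}^{j} exp(-(t_k - t)^2/(2 sigma^2)) dt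
   (here j is 0-based, so the interval is [j, j+1]). *)
Definition Gmat (R : realType) (m : nat) (t : 'I_m -> R) (sigma : R) : 'M[R]_(m, 95) :=
  \matrix_(k < m, j < 95)
    ((Num.sqrt (2 * pi) * sigma)^-1 *
     Rintegral (@lebesgue_measure R) `[(j%:R : R), (j.+1%:R : R)]%classic
       (fun s => expR (- (t k - s) ^+ 2 / (2 * sigma ^+ 2)))).

Definition Pmat (R : realType) (m : nat) (t : 'I_m -> R) (sigma alpha : R) : 'M[R]_(m, 123) :=
  alpha *: (Gmat t sigma *m Dmat R).

Definition Kset (j : nat) : seq nat :=
  if j \in [:: 1%N; 8%N; 15%N] then [:: 1%N] else iota 1 10.

(* 0-based column index of p^{(j)}_k. *)
Definition colidx (j k : nat) : nat :=
  if j == 1%N then 0%N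
  else if (j <= 7)%N then (10 * (j - 2) + k)%N
  else if j == 8%N then 61%N
  else if (j <= 14)%N then (61 + 10 * (j - 9) + k)%N
  else 122%N.

Definition pcol (R : realType) (m : nat) (P : 'M[R]_(m, 123)) (j k : nat) : 'cV[R]_m :=
  col (inord (colidx j k)) P.

Definition l1 (R : realType) (m : nat) (v : 'cV[R]_m) (S : {set 'I_m}) : R :=
  \sum_(i in S) `|v i ord0|.

Definition is_barcode (R : realType) (x : 'cV[R]_123) : Prop :=
  (forall i : 'I_123, x i ord0 = 0 \/ x i ord0 = 1) /\
  x (inord 0) ord0 = 1 /\ x (inord 61) ord0 = 1 /\ x (inord 122) ord0 = 1 /\
  (forall b : nat, (b < 6)%N ->
     #|[set i : 'I_123 | (1 + 10 * b <= i < 11 + 10 * b)%N && (x i ord0 == 1)]| = 1%N /\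
     #|[set i : 'I_123 | (62 + 10 * b <= i < 72 + 10 * b)%N && (x i ord0 == 1)]| = 1%N).

(* Algorithm 1, with the choices of k_min given by ks : nat -> nat (ks j
   used at step j).  resid P d ks n = value of delta at the start of the
   loop iteration j = n + 2. *)
Fixpoint resid (R : realType) (m : nat) (P : 'M[R]_(m, 123)) (d : 'cV[R]_m)
  (ks : nat -> nat) (n : nat) : 'cV[R]_m :=
  match n with
  | 0%N => d - pcol P 1 1
  | n'.+1 => let j := (n' + 2)%N in
      if j == 8%N then resid P d ks n' - pcol P 8 1
      else resid P d ks n' - pcol P j (ks j)
  end.

(* ks is a legitimate sequence of choices of Algorithm 1 on input d:
   at every step j in {2..14}\{8}, ks j is an argmin over k in [10]. *)
Definition alg1_run (R : realType) (m : nat) (P : 'M[R]_(m, 123)) (d : 'cV[R]_m)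
  (ks : nat -> nat) : Prop :=
  forall j : nat, (2 <= j <= 14)%N -> j != 8%N ->
    ks j \in iota 1 10 /\
    forall k, k \in iota 1 10 ->
      l1 (resid P d ks (j - 2) - pcol P j (ks j)) [set: 'I_m]%SET
      <= l1 (resid P d ks (j - 2) - pcol P j k) [set: 'I_m]%SET.

Definition alg1_out (R : realType) (ks : nat -> nat) : 'cV[R]_123 :=
  \col_(l < 123)
    (if (nat_of_ord l \in [:: 0%N; 61%N; 122%N]) ||
        has (fun j => (j != 8%N) && (colidx j (ks j) == l)) (iota 2 13)
     then 1 else 0).

From HB Require Import structures.
From mathcomp Require Import all_boot all_order all_algebra.
From mathcomp Require Import all_classical all_reals all_analysis.
From mathcomp Require Import lra zify.
Set Implicit Arguments. Unset Strict Implicit. Unset Printing Implicit Defensive.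
Import Order.TTheory GRing.Theory Num.Theory.
Local Open Scope ring_scope.

(* By induction on the steps of Algorithm 1, the residual [delta] at step [j]
   is [p^(j)_(k_j) + r_j + h], where [r_j] is the sum of the true columns of
   the later labels.  Subtracting a wrong column [p^(j)_k] instead of the true
   one costs more than [2 (|h|_(I_j) + 2 eps)] on [I_j], whereas [r_j] and [h]
   together contribute less than that there, and both columns are
   [eps]-small off [I_j]; so every argmin is the true digit.  Nothing about
   the Gaussian forward map is used: the argument works for any matrix. *)

Lemma flatten_colidx :
  flatten [seq [seq colidx j k | k <- Kset j] | j <- iota 1 15] = iota 0 123.
Proof. by vm_compute. Qed.

Lemma colidx_lt j k : (1 <= j <= 15)%N -> k \in Kset j -> (colidx j k < 123)%N.
Proof.
move=> hj hk; suff : colidx j k \in iota 0 123 by rewrite mem_iota.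
rewrite -flatten_colidx; apply/flattenP; exists [seq colidx j k | k <- Kset j].
  by apply/mapP; exists j; rewrite ?mem_iota.
exact: map_f.
Qed.

Lemma colidx_inj j j' k k' : (1 <= j <= 15)%N -> (1 <= j' <= 15)%N ->
  k \in Kset j -> k' \in Kset j' -> colidx j k = colidx j' k' -> j = j' /\ k = k'.
Proof.
have colidx_injb : all (fun j => all (fun j' => all (fun k => all (fun k' =>
    (colidx j k == colidx j' k') ==> (j == j') && (k == k'))
    (Kset j')) (Kset j)) (iota 1 15)) (iota 1 15) by vm_compute.
move=> hj hj' hk hk' e; move: colidx_injb.
move=> /allP /(_ j) /(_ _) /allP /(_ j') /(_ _) /allP /(_ k hk) /allP /(_ k' hk').
by rewrite !mem_iota e eqxx => /(_ hj) /(_ hj') /andP [/eqP -> /eqP ->].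
Qed.

Lemma colidx_fixed_label j k : (1 <= j <= 15)%N -> k \in Kset j ->
  (colidx j k \in [:: 0%N; 61%N; 122%N]) = (j \in [:: 1%N; 8%N; 15%N]).
Proof.
have colidx_fixedb : all (fun j => all (fun k => (colidx j k \in [:: 0%N; 61%N; 122%N])
    == (j \in [:: 1%N; 8%N; 15%N])) (Kset j)) (iota 1 15) by vm_compute.
move=> hj hk; apply/eqP; move: colidx_fixedb.
by move=> /allP /(_ j) /(_ _) /allP /(_ k hk); apply; rewrite mem_iota.
Qed.

Lemma digit_label_neq j : j \notin [:: 1%N; 8%N; 15%N] -> [/\ j != 1, j != 8 & j != 15]%N.
Proof. by rewrite !inE negb_or; case: eqP; case: eqP; case: eqP. Qed.

Lemma colidx_block j k : (1 <= j <= 15)%N -> j \notin [:: 1%N; 8%N; 15%N] ->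
  colidx j k = (colidx j 0 + k)%N.
Proof.
move=> hj /digit_label_neq [ne1 ne8 ne15].
rewrite /colidx (negbTE ne1) (negbTE ne8).
by case: ifP => ?; [|case: ifP => ?]; lia.
Qed.

Lemma l1D (R : realType) m (u v : 'cV[R]_m) S : l1 (u + v) S <= l1 u S + l1 v S.
Proof. by rewrite /l1 -big_split; apply: ler_sum => i _; rewrite mxE ler_normD. Qed.

Lemma l1B (R : realType) m (u v : 'cV[R]_m) S : l1 (u - v) S <= l1 u S + l1 v S.
Proof.
by rewrite /l1 -big_split; apply: ler_sum => i _; rewrite !mxE ler_normB.
Qed.

Lemma l1_setT (R : realType) m (u : 'cV[R]_m) S :
  l1 u [set: 'I_m]%SET = l1 u S + l1 u (~: S).
Proof. by rewrite /l1 (big_setID S) /= finset.setTI finset.setTD. Qed.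

(* On [I], [|d - b| >= |a - b| - |r + h|]; off [I], [|d - b| >= |r + h| - |a| - |b|]. *)
Lemma l1_separated_column_lt (R : realType) m (a b r h : 'cV[R]_m)
    (I : {set 'I_m}) eps :
  l1 r I < eps -> l1 a (~: I) < eps -> l1 b (~: I) < eps ->
  2 * (l1 h I + 2 * eps) < l1 (a - b) I ->
  l1 (a + r + h - a) [set: 'I_m]%SET < l1 (a + r + h - b) [set: 'I_m]%SET.
Proof.
move=> hr ha hb hab; set d := a + r + h.
have -> : d - a = r + h by rewrite /d addrC !addrA addNr add0r.
have on_I : l1 (a - b) I <= l1 (d - b) I + l1 (r + h) I.
  by rewrite (_ : a - b = (d - b) - (r + h)) ?l1B // /d; apply/matrixP=> i j; rewrite !mxE; lra.
have off_I : l1 (r + h) (~: I) <= l1 (d - b) (~: I) + l1 (a - b) (~: I).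
  by rewrite (_ : r + h = (d - b) - (a - b)) ?l1B // /d; apply/matrixP=> i j; rewrite !mxE; lra.
have := l1D r h I; have := l1B a b (~: I).
rewrite (l1_setT _ I) (l1_setT (d - b) I); lra.
Qed.

Section Barcode.
Variables (R : realType) (x : 'cV[R]_123).
Hypothesis hx : is_barcode x.

Definition barcode_block (j : nat) : {set 'I_123} :=
  [set i : 'I_123 | (colidx j 0 < i <= colidx j 0 + 10)%N && (x i ord0 == 1)].

(* The index [k_j] in [P x = \sum_j p^(j)_(k_j)]. *)
Definition barcode_digit (j : nat) : nat :=
  if j \in [:: 1%N; 8%N; 15%N] then 1%N
  else (odflt ord0 [pick i in barcode_block j] - colidx j 0)%N.

Lemma card_barcode_block j : (1 <= j <= 15)%N -> j \notin [:: 1%N; 8%N; 15%N] ->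
  #|barcode_block j| = 1%N.
Proof.
case: hx => _ [_ [_ [_ hb]]] hj /digit_label_neq [ne1 ne8 ne15].
rewrite /barcode_block /colidx (negbTE ne1) (negbTE ne8) ?addn0.
case: ifP => hj7; last have hj14 : (j <= 14)%N by lia.
- rewrite -[RHS](hb (j - 2)%N _).1; last by lia.
  by congr #|pred_of_set _|; apply/setP => i; rewrite !inE; congr (_ && _); lia.
- rewrite hj14 -[RHS](hb (j - 9)%N _).2; last by lia.
  by congr #|pred_of_set _|; apply/setP => i; rewrite !inE; congr (_ && _); lia.
Qed.

Lemma barcode_block1 j : (1 <= j <= 15)%N -> j \notin [:: 1%N; 8%N; 15%N] ->
  exists i0, barcode_block j = [set i0].
Proof. by move=> hj hs; apply/cards1P; rewrite card_barcode_block. Qed.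

Lemma barcode_digit_in j : (1 <= j <= 15)%N -> barcode_digit j \in Kset j.
Proof.
rewrite /barcode_digit /Kset => hj; case: ifPn => // hs; rewrite mem_iota.
case: pickP => [i|none]; first by rewrite /barcode_block inE => /andP [hi _] /=; lia.
have [i0 hS] := barcode_block1 hj hs.
by move: (none i0); rewrite hS inE eqxx.
Qed.

Lemma barcode_entry j k : (1 <= j <= 15)%N -> k \in Kset j ->
  x (inord (colidx j k)) ord0 = (k == barcode_digit j)%:R.
Proof.
move=> hj hk; rewrite /barcode_digit; case: ifPn => hs.
  move: hk; rewrite /Kset hs inE => /eqP ->; rewrite eqxx.
  case: hx => _ [h0 [h61 [h122 _]]].
  by move: hs; rewrite !inE => /or3P [] /eqP ->.
have [i0 hS] := barcode_block1 hj hs.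
have : i0 \in barcode_block j by rewrite hS inE.
rewrite inE => /andP [hi0 _].
have -> : [pick i in barcode_block j] = Some i0.
  by case: pickP => [i|/(_ i0)]; rewrite hS inE ?eqxx // => /eqP ->.
have hin : (colidx j 0 + k < 123)%N by rewrite -colidx_block ?colidx_lt.
move: hk; rewrite /Kset (negbTE hs) mem_iota => hk.
have hxk : (x (inord (colidx j k)) ord0 == 1) = (k == i0 - colidx j 0)%N.
  transitivity (inord (colidx j k) \in barcode_block j).
    by rewrite inE colidx_block // inordK // (_ : (_ < _ <= _)%N); lia.
  rewrite hS inE colidx_block //; apply/eqP/eqP => [<-|e].
    by rewrite inordK //; lia.
  by apply: val_inj; rewrite /= inordK //; lia.
move: hxk => /=; case: (hx.1 (inord (colidx j k))) => ->.
  by rewrite eq_sym oner_eq0 => <-.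
by rewrite eqxx => <-.
Qed.

Lemma mulmx_barcode m (P : 'M[R]_(m, 123)) :
  P *m x = \sum_(1 <= j < 16) pcol P j (barcode_digit j).
Proof.
apply/matrixP => i c; rewrite (ord1 c) !mxE summxE.
transitivity (\sum_(l <- iota 0 123) P i (inord l) * x (inord l) ord0).
  by rewrite -[iota 0 123]/(index_iota 0 123) big_mkord; apply: eq_bigr => l _; rewrite inord_val.
rewrite -flatten_colidx big_flatten big_map -[iota 1 15]/(index_iota 1 16).
rewrite !big_seq; apply: eq_bigr => j; rewrite mem_index_iota => hj.
rewrite big_map !mxE (big_rem (barcode_digit j)) ?barcode_digit_in //.
rewrite barcode_entry ?barcode_digit_in // eqxx mulr1 big_seq big1 => [|k].
  by rewrite /= addr0.
rewrite mem_rem_uniq; last by rewrite /Kset; case: ifP.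
by rewrite inE => /andP [hne hk]; rewrite barcode_entry // (negbTE hne) mulr0.
Qed.

Lemma alg1_out_barcode (ks : nat -> nat) :
    (forall j, (2 <= j <= 14)%N -> j != 8%N -> ks j = barcode_digit j) ->
  alg1_out R ks = x.
Proof.
move=> hks; apply/matrixP => l c; rewrite (ord1 c) mxE.
have : nat_of_ord l \in iota 0 123 by rewrite mem_iota ltn_ord.
rewrite -flatten_colidx => /flattenP [_ /mapP [j + ->] /mapP [k hk el]].
rewrite mem_iota => hj.
have -> : x l ord0 = x (inord (colidx j k)) ord0 by rewrite -el inord_val.
rewrite el barcode_entry // colidx_fixed_label //.
case hs: (j \in [:: 1%N; 8%N; 15%N]).
  by move: hk; rewrite /Kset hs inE /barcode_digit hs => /eqP ->.
have [ne1 ne8 ne15] := digit_label_neq (negbT hs).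
suff -> : has (fun j' => (j' != 8%N) && (colidx j' (ks j') == colidx j k)) (iota 2 13)
        = (k == barcode_digit j) by case: (k == _).
apply/hasP/eqP => [[j' + /andP [ne8' /eqP e]] | ->].
  rewrite mem_iota => hj'; have hj'15 : (1 <= j' <= 15)%N by lia.
  rewrite hks // in e.
  by have [-> ->] := colidx_inj hj'15 hj (barcode_digit_in hj'15) hk e.
exists j; first by rewrite mem_iota; lia.
by rewrite ne8 hks ?eqxx //; lia.
Qed.

End Barcode.

Section Decoding.
Variables (R : realType) (m : nat) (P : 'M[R]_(m, 123)) (I : nat -> {set 'I_m}) (eps : R).
Variables (x : 'cV[R]_123) (h : 'cV[R]_m) (ks : nat -> nat).
Hypothesis hi : forall j k, (1 <= j <= 15)%N -> k \in Kset j ->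
  l1 (pcol P j k) (~: I j) < eps.
Hypothesis hii : forall j (ks : nat -> nat), (1 <= j <= 15)%N ->
  (forall j', (j < j' <= 15)%N -> ks j' \in Kset j') ->
  l1 (\sum_(j.+1 <= j' < 16) pcol P j' (ks j')) (I j) < eps.
Hypothesis hx : is_barcode x.
Hypothesis hsep : forall j k1 k2, (1 <= j <= 15)%N -> k1 \in Kset j -> k2 \in Kset j ->
  k1 != k2 -> 2 * (l1 h (I j) + 2 * eps) < l1 (pcol P j k1 - pcol P j k2) (I j).
Hypothesis hrun : alg1_run P (P *m x + h) ks.

Let digit := barcode_digit x.

Definition barcode_tail (j : nat) : 'cV[R]_m := \sum_(j <= j' < 16) pcol P j' (digit j').

Lemma barcode_tailS j : (j < 16)%N -> barcode_tail j = pcol P j (digit j) + barcode_tail j.+1.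
Proof. by move=> hj; rewrite /barcode_tail big_ltn. Qed.

Lemma alg1_choice_digit j : (2 <= j <= 14)%N -> j != 8%N ->
  resid P (P *m x + h) ks (j - 2) = barcode_tail j + h -> ks j = digit j.
Proof.
move=> hj ne8 hres; have [hks hmin] := hrun hj ne8.
have hj15 : (1 <= j <= 15)%N by lia.
have hK : Kset j = iota 1 10.
  by rewrite /Kset; case: ifP => //; rewrite !inE (negbTE ne8); lia.
apply/eqP; apply: contraT => hne.
have := hmin (digit j); rewrite -hK (barcode_digit_in hx) // => /(_ isT).
rewrite hres barcode_tailS; last by lia.
rewrite leNgt => /negbTE <-.
apply: l1_separated_column_lt.
- by apply: hii => // j' hj'; apply: (barcode_digit_in hx); lia.
- exact/hi/(barcode_digit_in hx).
- by apply: hi; rewrite ?hK.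
- by apply: hsep; rewrite ?(barcode_digit_in hx) ?hK // eq_sym.
Qed.

Lemma resid_barcode n : (n <= 12)%N ->
  resid P (P *m x + h) ks n = barcode_tail (n + 2) + h.
Proof.
elim: n => [_ | n IH hn].
  rewrite /= (mulmx_barcode hx) -/(barcode_tail 1) barcode_tailS //.
  by apply/matrixP => a b; rewrite !mxE; lra.
have hres : resid P (P *m x + h) ks n.+1
    = resid P (P *m x + h) ks n - pcol P (n + 2) (digit (n + 2)).
  rewrite /=; case: eqVneq => [-> // | ne8].
  by rewrite (alg1_choice_digit _ ne8) ?addnK ?IH ?(ltnW hn) //; lia.
rewrite hres IH ?(ltnW hn) // (@barcode_tailS (n + 2)) ?addSn; last by lia.
by apply/matrixP => a b; rewrite !mxE; lra.
Qed.

Lemma alg1_choices_barcode j : (2 <= j <= 14)%N -> j != 8%N -> ks j = digit j.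
Proof.
move=> hj ne8; apply: alg1_choice_digit => //.
by rewrite resid_barcode ?subnK //; lia.
Qed.

End Decoding.

Theorem theorem1 (R : realType) (m : nat) (hm : (0 < m)%N)
  (sigma alpha : R) (hsigma : 0 < sigma) (halpha : 0 < alpha)
  (t : 'I_m -> R) (t0 step : R)
  (ht : forall k : 'I_m, t k = t0 + (nat_of_ord k)%:R * step)
  (hstep : 0 < step) (ht0 : 0 <= t0) (ht1 : t0 + (m.-1)%:R * step <= 95)
  (I : nat -> {set 'I_m}) (eps : R)
  (hi : forall j k, (1 <= j <= 15)%N -> k \in Kset j ->
          l1 (pcol (Pmat t sigma alpha) j k) (~: I j) < eps)
  (hii : forall j (ks : nat -> nat), (1 <= j <= 15)%N ->
          (forall j', (j < j' <= 15)%N -> ks j' \in Kset j') ->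
          l1 (\sum_(j.+1 <= j' < 16) pcol (Pmat t sigma alpha) j' (ks j')) (I j) < eps)
  (x : 'cV[R]_123) (hx : is_barcode x) (h : 'cV[R]_m)
  (hsep : forall j k1 k2, (1 <= j <= 15)%N -> k1 \in Kset j -> k2 \in Kset j -> k1 != k2 ->
          l1 (pcol (Pmat t sigma alpha) j k1 - pcol (Pmat t sigma alpha) j k2) (I j)
          > 2 * (l1 h (I j) + 2 * eps))
  (ks : nat -> nat)
  (hrun : alg1_run (Pmat t sigma alpha) (Pmat t sigma alpha *m x + h) ks) :
  alg1_out R ks = x.
Proof.
apply: (alg1_out_barcode hx) => j hj ne8.
exact: (alg1_choices_barcode hi hii hx hsep hrun).
Qed.
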